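(* Let $b\in\mathbb{Z}^{V_+}_{\ge0}$ and $\bar x\in\mathcal{X}\cap\mathbb{Z}^E$. Then $$\operatorname{conv}\big(\Pi(\bar x)\cap[\mathbf 0,b]^N\big)=\bigcap_{R\in\mathcal{R}(\bar x)}\operatorname{conv}\big(\Pi(R)\cap[\mathbf 0,b]^N\big).$$
   Context: $G=(V,E)$ complete undirected graph with $V=\{0\}\cup V_+$ ($0$ depot, $V_+$ customers); $D=(V,A)$ replaces each edge by two opposite arcs. Capacity $C>0$; scenarios $\xi\in[N]$ with demands $d^\xi\in\mathbb{Q}^{V_+}_{\ge0}$, $d^\xi(v)\le C$, and probabilities $p_\xi\ge0$ summing to $1$; $\bar d=\sum_\xi p_\xi d^\xi$. $f(S)=\sum_{i\in S}f(i)$; $\delta(S)$: edges with exactly one end in $S$; $E(S)$: edges with both ends in $S$. $\mathcal{X}$ is one of $\mathcal{X}_{\mathrm{sub}}=\{x\in[0,2]^E: x(\delta(v))=2\ \forall v\in V_+,\ x(E(S))\le|S|-1\ \forall\emptyset\ne S\subseteq V_+\}$ or $\mathcal{X}_{\mathrm{cvrp}}=\mathcal{X}_{\mathrm{sub}}\cap\{x:x(\delta(0))=2k,\ x(E(S))\le|S|-\lceil\bar d(S)/C\rceil\}$. A route $R=(v_1,\dots,v_\ell)$ is the cycle $0,v_1,\dots,v_\ell,0$ through distinct customers, $v_0=v_{\ell+1}=0$. Each $x\in\mathcal{X}\cap\mathbb{Z}^E$ encodes a collection of routes $\mathcal{R}(x)$ whose customer sets partition $V_+$. For a route $R$ and $\xi$,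 $\mathcal{Y}^\xi(R)$ is the set of $y^\xi\in\mathbb{Z}^{V_+}_{\ge0}$ for which there exist $f\in\mathbb{R}^A_{\ge0}$, $g\in\mathbb{R}^{V_+}_{\ge0}$ with $f_{(v_{i-1},v_i)}+d^\xi(v_i)=f_{(v_i,v_{i+1})}+g_{v_i}$ ($i\in[\ell]$), $f_{(v_{i-1},v_i)}\le C$ ($i\in[\ell+1]$), $g_{v_i}\le Cy^\xi_{v_i}$ ($i\in[\ell]$). $\Pi(R)=\mathcal{Y}^1(R)\times\cdots\times\mathcal{Y}^N(R)\subseteq\mathbb{Z}^{[N]\times V_+}$, $\Pi(x)=\bigcap_{R\in\mathcal{R}(x)}\Pi(R)$. $[\mathbf 0,b]^N=\{y:0\le y^\xi_v\le b_v\}$. *)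

From HB Require Import structures.
From mathcomp Require Import all_boot all_order all_algebra.
From mathcomp Require Import reals.
Set Implicit Arguments. Unset Strict Implicit. Unset Printing Implicit Defensive.
Import Order.TTheory GRing.Theory Num.Theory.
Local Open Scope ring_scope.

(* Customers V_+ = 'I_n ; vertices V = option 'I_n with None = depot 0.
   Edges of the complete graph G = 2-element subsets of V.
   Scenarios [N] = 'I_N. *)

Definition is_edge n (e : {set option 'I_n}) : bool := #|e| == 2%N.

Definition cust_set n (S : {set 'I_n}) : {set option 'I_n} := Some @: S.

Definition x_delta n (x : {set option 'I_n} -> int) (S : {set option 'I_n}) : int :=
  \sum_(e | is_edge e && (#|e :&: S| == 1%N)) x e.
Definition x_inside n (x : {set option 'I_n} -> int) (S : {set option 'I_n}) : int :=
  \sum_(e | is_edge e && (e \subset S)) x e.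

Definition in_Xsub n (x : {set option 'I_n} -> int) : Prop :=
  [/\ (forall e, is_edge e -> 0 <= x e <= 2),
      (forall v : 'I_n, x_delta x [set Some v] = 2) &
      (forall S : {set 'I_n}, S != set0 -> x_inside x (cust_set S) <= #|S|%:Z - 1)].

Definition dbar N n (p : 'I_N -> rat) (d : 'I_N -> 'I_n -> rat) (v : 'I_n) : rat :=
  \sum_(xi < N) p xi * d xi v.

Definition in_Xcvrp N n (C : rat) (p : 'I_N -> rat) (d : 'I_N -> 'I_n -> rat) (k : nat)
    (x : {set option 'I_n} -> int) : Prop :=
  [/\ in_Xsub x,
      x_delta x [set None] = 2 * k%:Z &
      (forall S : {set 'I_n}, S != set0 ->
         x_inside x (cust_set S) <= #|S|%:Z - Num.ceil ((\sum_(v in S) dbar p d v) / C))].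

(* A route R = (v_1,...,v_l) is the cycle 0,v_1,...,v_l,0.
   route_vs r = [:: v_0 = 0; v_1; ...; v_l; v_{l+1} = 0]. *)
Definition route_vs n (r : seq 'I_n) : seq (option 'I_n) :=
  rcons (None :: map Some r) None.

Definition route_edges n (r : seq 'I_n) : seq {set option 'I_n} :=
  pairmap (fun a b => [set a; b]) None (rcons (map Some r) None).

(* rs is the collection of routes R(x) encoded by the integer vector x:
   routes are nonempty sequences of distinct customers, their customer sets
   partition V_+, and x_e is the number of times the cycles traverse e. *)
Definition routes_of n (x : {set option 'I_n} -> int) (rs : seq (seq 'I_n)) : Prop :=
  [/\ (forall r, r \in rs -> r != [::] /\ uniq r),
      (forall v : 'I_n, (\sum_(r <- rs) count_mem v r)%N = 1%N) &
      (forall e, is_edge e -> x e = (\sum_(r <- rs) count_mem e (route_edges r))%:Z)].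

Definition in_Y (R : realType) n (C : rat) (dxi : 'I_n -> rat) (r : seq 'I_n)
    (y : 'I_n -> int) : Prop :=
  (forall v, 0 <= y v) /\
  exists (f : option 'I_n -> option 'I_n -> R) (g : 'I_n -> R),
    [/\ (forall a b, 0 <= f a b),
        (forall v, 0 <= g v),
        (forall i : 'I_(size r),
           let c := tnth (in_tuple r) i in
           f (nth None (route_vs r) i) (Some c) + ratr (dxi c)
           = f (Some c) (nth None (route_vs r) i.+2) + g c),
        (forall i : nat, (i < (size r).+1)%N ->
           f (nth None (route_vs r) i) (nth None (route_vs r) i.+1) <= ratr C) &
        (forall i : 'I_(size r),
           let c := tnth (in_tuple r) i in g c <= ratr C * (y c)%:~R)].

Definition in_PiR (R : realType) N n (C : rat) (d : 'I_N -> 'I_n -> rat) (r : seq 'I_n)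
    (y : 'I_N -> 'I_n -> int) : Prop :=
  forall xi : 'I_N, in_Y R C (d xi) r (y xi).

Definition in_Pix (R : realType) N n (C : rat) (d : 'I_N -> 'I_n -> rat)
    (rs : seq (seq 'I_n)) (y : 'I_N -> 'I_n -> int) : Prop :=
  forall r, r \in rs -> in_PiR R C d r y.

Definition in_box N n (b : 'I_n -> int) (y : 'I_N -> 'I_n -> int) : Prop :=
  forall (xi : 'I_N) (v : 'I_n), 0 <= y xi v <= b v.

Definition conv (R : realType) N n (S : ('I_N -> 'I_n -> int) -> Prop)
    (z : 'I_N -> 'I_n -> R) : Prop :=
  exists (m : nat) (pts : 'I_m -> 'I_N -> 'I_n -> int) (lam : 'I_m -> R),
    [/\ (forall i, S (pts i)),
        (forall i, 0 <= lam i),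
        \sum_(i < m) lam i = 1 &
        (forall xi v, z xi v = \sum_(i < m) lam i * (pts i xi v)%:~R)].

From HB Require Import structures.
From mathcomp Require Import all_boot all_order all_algebra.
From mathcomp Require Import reals.
From mathcomp Require Import zify.
Set Implicit Arguments. Unset Strict Implicit. Unset Printing Implicit Defensive.
Import Order.TTheory GRing.Theory Num.Theory.
Local Open Scope ring_scope.

(* Inside the box, Pi(R) only constrains the coordinates (xi, v) with
   v a customer of R, and distinct routes of x have disjoint customer sets.
   Two convex combinations, one of points of Pi(R) and one of points of
   Pi(R') for disjoint R, R', are glued with the product weights
   lam_i * mu_j, the (i, j)-th point taking its R-coordinates from the i-th
   point and all others from the j-th one; it lies in Pi(R) and Pi(R'). *)

Definition local_on {N n : nat} (A : pred 'I_n) (b : 'I_n -> int)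
    (S : ('I_N -> 'I_n -> int) -> Prop) :=
  forall y y', S y -> in_box b y' ->
    (forall xi v, A v -> y' xi v = y xi v) -> S y'.

Section ConvexHull.
Variables (R : realType) (N n : nat).
Implicit Types (S : ('I_N -> 'I_n -> int) -> Prop) (z : 'I_N -> 'I_n -> R).

Lemma conv_mono S S' z : (forall y, S y -> S' y) -> conv S z -> conv S' z.
Proof.
move=> sSS' [m [pts [lam [Spts lam_ge0 lam_sum zE]]]].
by exists m, pts, lam; split=> // i; apply: sSS'.
Qed.

Lemma conv_finType S z (T : finType) (pts : T -> 'I_N -> 'I_n -> int)
    (lam : T -> R) :
  (forall i, S (pts i)) -> (forall i, 0 <= lam i) -> \sum_i lam i = 1 ->
  (forall xi v, z xi v = \sum_i lam i * (pts i xi v)%:~R) -> conv S z.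
Proof.
move=> Spts lam_ge0 lam_sum zE.
have enum_bij : {on predT, bijective (@enum_val T predT)}.
  exact/onW_bij/enum_val_bij.
exists #|T|, (pts \o enum_val), (lam \o enum_val); split.
- by move=> i; apply: Spts.
- by move=> i; apply: lam_ge0.
- by rewrite -lam_sum (reindex _ enum_bij).
- by move=> xi v; rewrite zE (reindex _ enum_bij).
Qed.

Lemma conv_glue (A : pred 'I_n) b S1 S2 z :
  (forall y, S1 y -> in_box b y) -> (forall y, S2 y -> in_box b y) ->
  local_on A b S1 -> local_on (predC A) b S2 ->
  conv S1 z -> conv S2 z -> conv (fun y => S1 y /\ S2 y) z.
Proof.
move=> box1 box2 loc1 loc2 [m1 [p1 [l1 [S1p1 l1_ge0 l1_sum zE1]]]].
move=> [m2 [p2 [l2 [S2p2 l2_ge0 l2_sum zE2]]]].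
pose w (ij : 'I_m1 * 'I_m2) xi v := if A v then p1 ij.1 xi v else p2 ij.2 xi v.
have box_w ij : in_box b (w ij).
  by move=> xi v; rewrite /w; case: (A v); [apply: box1 | apply: box2].
apply: (@conv_finType _ _ _ w (fun ij => l1 ij.1 * l2 ij.2)).
- move=> [i j]; split.
  + by apply: (loc1 (p1 i)) => // xi v Av; rewrite /w Av.
  + by apply: (loc2 (p2 j)) => // xi v /negbTE nAv; rewrite /w nAv.
- by move=> [i j]; apply: mulr_ge0.
- rewrite -(pair_bigA _ (fun i j => l1 i * l2 j)) -l1_sum.
  by apply: eq_bigr => i _; rewrite -mulr_sumr l2_sum mulr1.
- move=> xi v.
  rewrite -(pair_bigA _ (fun i j => l1 i * l2 j * (w (i, j) xi v)%:~R)) /w /=.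
  case: (A v).
  + rewrite zE1; apply: eq_bigr => i _.
    under eq_bigr do rewrite mulrAC.
    by rewrite -mulr_sumr l2_sum mulr1.
  + rewrite zE2 exchange_big; apply: eq_bigr => j _.
    under eq_bigr do rewrite [l1 _ * _]mulrC -mulrA.
    by rewrite -mulr_sumr -mulr_suml l1_sum mul1r.
Qed.

End ConvexHull.

Lemma in_Y_local (R : realType) n C dxi (r : seq 'I_n) (y y' : 'I_n -> int) :
  in_Y R C dxi r y -> (forall v, 0 <= y' v) ->
  (forall v, v \in r -> y' v = y v) -> in_Y R C dxi r y'.
Proof.
move=> [_ [f [g [f_ge0 g_ge0 flow cap gy]]]] y'_ge0 y'E.
split=> //; exists f, g; split=> // i /=.
by rewrite y'E ?mem_tnth //; exact: (gy i).
Qed.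

Lemma in_box_ge0 N n (b : 'I_n -> int) (y : 'I_N -> 'I_n -> int) xi v :
  in_box b y -> 0 <= y xi v.
Proof. by move=> /(_ xi v) /andP[]. Qed.

Section Routes.
Variables (R : realType) (N n : nat) (C : rat) (d : 'I_N -> 'I_n -> rat).
Variable b : 'I_n -> int.

Lemma in_PiR_box_local (r : seq 'I_n) :
  local_on (mem r) b (fun y => in_PiR R C d r y /\ in_box b y).
Proof.
move=> y y' [Piy _] boxy' y'E; split=> // xi.
apply: in_Y_local (Piy xi) _ _ => [v | v vr]; last exact: y'E.
exact: in_box_ge0 boxy'.
Qed.

Lemma in_Pix_box_local (A : pred 'I_n) (rs : seq (seq 'I_n)) :
  (forall r v, r \in rs -> v \in r -> A v) ->
  local_on A b (fun y => in_Pix R C d rs y /\ in_box b y).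
Proof.
move=> rsA y y' [Piy boxy] boxy' y'E; split=> // r rrs.
have [] // := @in_PiR_box_local r _ _ (conj (Piy r rrs) boxy) boxy'.
by move=> xi v vr; apply: y'E; apply: rsA vr.
Qed.

Lemma notin_route_of_disjoint (r : seq 'I_n) rs v r' :
  (\sum_(s <- r :: rs) count_mem v s <= 1)%N -> r' \in rs -> v \in r' ->
  v \notin r.
Proof.
move=> + r'rs vr'; rewrite big_cons (big_rem r' r'rs) /= => cnt.
apply/count_memPn; move: vr' cnt; rewrite -has_pred1 has_count.
by move: (count_mem v r) (count_mem v r') => a a'; lia.
Qed.

Lemma conv_Pix_of_routes (rs : seq (seq 'I_n)) (z : 'I_N -> 'I_n -> R) :
  (forall v, (\sum_(r <- rs) count_mem v r <= 1)%N) -> conv (in_box b) z ->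
  (forall r, r \in rs -> conv (fun y => in_PiR R C d r y /\ in_box b y) z) ->
  conv (fun y => in_Pix R C d rs y /\ in_box b y) z.
Proof.
elim: rs => [|r rs IH] disj convbox convr.
  by apply: conv_mono convbox => y boxy; split=> // r; rewrite in_nil.
have disj' v : (\sum_(s <- rs) count_mem v s <= 1)%N.
  by apply: leq_trans (disj v); rewrite big_cons leq_addl.
have local_rs : local_on (predC (mem r)) b
    (fun y => in_Pix R C d rs y /\ in_box b y).
  apply: in_Pix_box_local => r' v r'rs vr'.
  exact: notin_route_of_disjoint (disj v) r'rs vr'.
have convrs : conv (fun y => in_Pix R C d rs y /\ in_box b y) z.
  by apply: IH => // r' r'rs; apply: convr; rewrite in_cons r'rs orbT.
apply: conv_mono (conv_glue _ _ (@in_PiR_box_local r) local_rs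
  (convr r (mem_head _ _)) convrs) => [y [[Piry boxy] [Pixy _]] | y [] | y []] //.
by split=> // r'; rewrite in_cons => /predU1P[-> | /Pixy].
Qed.

End Routes.

Theorem lemma7 (R : realType) (n N : nat) (C : rat) (p : 'I_N -> rat)
    (d : 'I_N -> 'I_n -> rat) (k : nat)
    (hC : 0 < C) (hp : forall xi, 0 <= p xi) (hp1 : \sum_(xi < N) p xi = 1)
    (hd : forall xi v, 0 <= d xi v <= C)
    (b : 'I_n -> int) (hb : forall v, 0 <= b v)
    (x : {set option 'I_n} -> int) (hX : in_Xsub x \/ in_Xcvrp C p d k x)
    (rs : seq (seq 'I_n)) (hrs : routes_of x rs)
    (z : 'I_N -> 'I_n -> R) :
  conv (fun y => in_Pix R C d rs y /\ in_box b y) z <->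
  (forall r, r \in rs -> conv (fun y => in_PiR R C d r y /\ in_box b y) z).
Proof.
split=> [convPix r rrs | convr].
  by apply: conv_mono convPix => y [Piy boxy]; split=> //; apply: Piy.
case: hrs => _ partition _.
apply: conv_Pix_of_routes => [v | | //]; first by rewrite partition.
case: rs partition convr => [|r rs] partition convr.
  (* with no routes the partition property leaves no customers at all *)
  exists 1%N, (fun _ _ _ => 0), (fun _ => 1); split=> //.
  - by move=> _ xi v; rewrite lexx hb.
  - by rewrite big_ord1.
  - by move=> xi v; have := partition v; rewrite big_nil.
by apply: conv_mono (convr r (mem_head _ _)) => y [].
Qed.
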